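(* Let $G$ be a connected (finite, simple) graph. Then $G$ is (claw, bull)-free if and only if it belongs to one of the following (disjoint) classes of graphs: (i) the class of graphs which are expansions of paths of length at least four; (ii) the class of graphs which are expansions of cycles of length at least six; (iii) the class of connected graphs which are complements of triangle-free graphs.
   Context: A claw is a graph isomorphic to $K_{1,3}$. A bull is the graph obtained from a triangle by adding two pendant edges at two different vertices (so it has 5 vertices and 5 edges). A graph is (claw, bull)-free if it has no induced subgraph isomorphic to a claw or to a bull. An expansion of a graph $F$ with vertex set $\{v_1,\dots,v_n\}$ is any graph $H$ obtained from $F$ by replacing each vertex $v_i$ by a nonempty clique $K^{[i]}$, the cliques being pairwise vertex-disjoint, and adding all edges between $V(K^{[i]})$ and $V(K^{[j]})$ whenever $v_iv_j\in E(F)$ (and no other edges between different cliques). The length of a path is its number of edges. *)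

From mathcomp Require Import all_boot.
Set Implicit Arguments. Unset Strict Implicit. Unset Printing Implicit Defensive.

Definition simple_graph (T : finType) (e : rel T) : Prop :=
  symmetric e /\ irreflexive e.

Definition connected_graph (T : finType) (e : rel T) : Prop :=
  0 < #|T| /\ forall x y : T, connect e x y.

Definition has_induced (k : nat) (f : rel 'I_k) (T : finType) (e : rel T) : Prop :=
  exists g : 'I_k -> T, injective g /\
    forall i j : 'I_k, i != j -> e (g i) (g j) = f i j.

Definition claw : rel 'I_4 :=
  fun i j => (i != j) && ((val i == 0) || (val j == 0)).

(* The bull: triangle 0,1,2 with pendant vertices 3 (at 0) and 4 (at 1). *)
Definition bull_edge (a b : nat) : bool :=
  [|| (a == 0) && (b == 1), (a == 0) && (b == 2), (a == 1) && (b == 2),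
      (a == 0) && (b == 3) | (a == 1) && (b == 4)].
Definition bull : rel 'I_5 :=
  fun i j => bull_edge (val i) (val j) || bull_edge (val j) (val i).

Definition claw_bull_free (T : finType) (e : rel T) : Prop :=
  ~ has_induced claw e /\ ~ has_induced bull e.

(* Path with n vertices 0 - 1 - ... - (n-1), i.e. of length n-1. *)
Definition path_graph (n : nat) : rel 'I_n :=
  fun i j => (val i == (val j).+1) || (val j == (val i).+1).

(* Cycle with n vertices 0 - 1 - ... - (n-1) - 0 (length n, meaningful for n >= 3). *)
Definition cycle_graph (n : nat) : rel 'I_n :=
  fun i j => (val j == (val i).+1 %% n) || (val i == (val j).+1 %% n).

(* G = (T,e) is an expansion of F = ('I_n, f): T is partitioned by phi into the
   n nonempty classes phi^-1(i) (cliques K^[i]); two distinct vertices are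
   adjacent iff they are in the same class, or in classes i, j with ij in E(F). *)
Definition expansion_of (n : nat) (f : rel 'I_n) (T : finType) (e : rel T) : Prop :=
  exists phi : T -> 'I_n,
    (forall i : 'I_n, exists x : T, phi x = i) /\
    (forall x y : T, x != y -> e x y = (phi x == phi y) || f (phi x) (phi y)).

Definition triangle_free (T : finType) (r : rel T) : Prop :=
  forall x y z : T, ~~ [&& r x y, r y z & r x z].

Definition complement (T : finType) (e : rel T) : rel T :=
  fun x y => (x != y) && ~~ e x y.

Definition class_i (T : finType) (e : rel T) : Prop :=
  exists L : nat, 4 <= L /\ @expansion_of L.+1 (@path_graph L.+1) T e.
Definition class_ii (T : finType) (e : rel T) : Prop :=
  exists L : nat, 6 <= L /\ @expansion_of L (@cycle_graph L) T e.
Definition class_iii (T : finType) (e : rel T) : Prop :=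
  connected_graph e /\ triangle_free (complement e).

(* Sufficiency. Two vertices of one clique of an expansion have the same neighbours
   outside it, so the triangle of an induced bull lies in three distinct cliques forming
   a triangle of the base graph, and an induced claw gives a base vertex with three
   neighbours; paths and cycles of length at least four have neither. A claw and a bull
   both contain three pairwise non-adjacent vertices, which the complement of a
   triangle-free graph cannot have.
   Necessity. If G has three pairwise non-adjacent vertices, connectivity and claw- and
   bull-freeness yield an induced path on five vertices, i.e. a vertex set S inducing an
   expansion of a path with at least five cliques. A vertex outside S with a neighbour in
   S is complete to the cliques it meets, and these are either a window {k-1, k, k+1}, or
   one end clique, or both end cliques; in the first two cases S grows. When S cannot
   grow, either S is everything, or the vertices outside S all see exactly both end
   cliques, form one more clique, and close the path into a cycle of length at least six.
   Disjointness. The end cliques of a path expansion are simplicial, no vertex of a cycle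
   expansion is, and in both expansions the cliques 0, 2, 4 are pairwise non-adjacent. *)

From mathcomp Require Import all_boot zify.
Set Implicit Arguments. Unset Strict Implicit. Unset Printing Implicit Defensive.

Lemma eq_succ_modn L a b : a < L ->
  (b == a.+1 %% L) = ((b == a.+1) && (a.+1 < L)) || ((b == 0) && (a.+1 == L)).
Proof.
move=> aL; have [lt_aL | ->] : a.+1 < L \/ a.+1 = L by lia.
  by rewrite modn_small //; lia.
by rewrite modnn; lia.
Qed.

Definition max_degree_two n (f : rel 'I_n) :=
  forall c a b d, f c a -> f c b -> f c d -> [|| a == b, a == d | b == d].

Lemma path_graph_triangle_free n : triangle_free (@path_graph n).
Proof. by move=> [i ?] [j ?] [k ?]; rewrite /path_graph /=; lia. Qed.

Lemma path_graph_max_degree_two n : max_degree_two (@path_graph n).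
Proof. by move=> [c ?] [a ?] [b ?] [d ?]; rewrite -!val_eqE /path_graph /=; lia. Qed.

Lemma cycle_graph_triangle_free L : 4 <= L -> triangle_free (@cycle_graph L).
Proof.
move=> L4 [i /= iL] [j /= jL] [k /= kL].
by rewrite /cycle_graph /= !eq_succ_modn //; lia.
Qed.

Lemma cycle_graph_max_degree_two L : max_degree_two (@cycle_graph L).
Proof.
move=> [c /= cL] [a /= aL] [b /= bL] [d /= dL].
by rewrite /cycle_graph -!val_eqE /= !eq_succ_modn //; lia.
Qed.

Lemma cycle_graph_open_neighbourhood L (c : 'I_L) : 4 <= L -> exists a b : 'I_L,
  [/\ cycle_graph c a, cycle_graph c b, uniq [:: c; a; b] & ~~ cycle_graph a b].
Proof.
case: L c => [[]//|L] [c /= cL] L4.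
have [a [b [aL bL nbrs]]] : exists a b, [/\ a <= L, b <= L &
    [&& (a == c.+1 %% L.+1) || (c == a.+1 %% L.+1), (b == c.+1 %% L.+1) || (c == b.+1 %% L.+1),
        [&& c != a, c != b & a != b] & ~~ ((b == a.+1 %% L.+1) || (a == b.+1 %% L.+1))]].
  have [c0|[cL'|cE]] : c = 0 \/ 0 < c < L \/ c = L by lia.
  - by exists 1, L; split; rewrite ?eq_succ_modn //; lia.
  - by exists c.+1, c.-1; split; rewrite ?eq_succ_modn //; lia.
  - by exists 0, c.-1; split; rewrite ?eq_succ_modn //; lia.
exists (inord a), (inord b); move: nbrs.
rewrite /cycle_graph /= !inE !negb_or -!val_eqE /= !inordK //.
by case/and4P=> -> -> /and3P[-> -> ->] ->.
Qed.

(** * Expansions and induced subgraphs *)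

Section SimpleGraph.
Variables (T : finType) (e : rel T).
Hypotheses (esym : symmetric e) (eirr : irreflexive e).

Ltac edge := solve [ by [] | by rewrite esym | by apply/negbTE | by rewrite esym; apply/negbTE
  | by apply/negbT | by rewrite esym; apply/negbT ].

Lemma edge_neq x y : e x y -> x != y.
Proof. by apply: contraTneq => ->; rewrite eirr. Qed.

Lemma edge_nonedge_neq z x y : e z x -> ~~ e z y -> x != y.
Proof. by move=> ezx; apply: contraNneq => <-. Qed.

Lemma has_induced_nth k (f : rel 'I_k) (s : seq T) x0 : size s = k -> uniq s ->
  (forall i j : 'I_k, i != j -> e (nth x0 s i) (nth x0 s j) = f i j) -> has_induced f e.
Proof.
move=> size_s uniq_s sE; exists (fun i => nth x0 s i); split=> // i j /eqP.
by rewrite nth_uniq ?size_s // => /eqP/val_inj.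
Qed.

(* Separates [x] from [y] by an edge, or by a vertex adjacent to exactly one of them. *)
Ltac neq := match goal with |- is_true (?x != ?y) => first
  [ done | by rewrite eq_sym | by apply: edge_neq; edge | by rewrite eq_sym; apply: edge_neq; edge
  | match goal with z : _ |- _ => by apply: (@edge_nonedge_neq z x y); edge end
  | match goal with z : _ |- _ => by rewrite eq_sym; apply: (@edge_nonedge_neq z y x); edge end ]
  end.

Ltac graph := solve [ edge | neq ].

Ltac distinct := rewrite /= !inE !negb_or ?andbT; repeat (apply/andP; split); neq.

Lemma claw_induced c a b d : e c a -> e c b -> e c d -> ~~ e a b -> ~~ e a d -> ~~ e b d ->
  a != b -> a != d -> b != d -> has_induced claw e.
Proof.
move=> ca cb cd ab ad bd nab nad nbd.
apply: (@has_induced_nth _ _ [:: c; a; b; d] c) => //; first by distinct.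
by case=> [[|[|[|[|?]]]] ?] [[|[|[|[|?]]]] ?] //= _; rewrite /claw /=; edge.
Qed.

Lemma bull_induced a b c d f : e a b -> e a c -> e b c -> e a d -> e b f ->
  ~~ e a f -> ~~ e b d -> ~~ e c d -> ~~ e c f -> ~~ e d f -> has_induced bull e.
Proof.
move=> ab ac bc ad bf af bd cd cf df.
apply: (@has_induced_nth _ _ [:: a; b; c; d; f] a) => //; first by distinct.
by case=> [[|[|[|[|[|?]]]]] ?] [[|[|[|[|[|?]]]]] ?] //= _; rewrite /bull /bull_edge /=; edge.
Qed.

Lemma induced_claw_witness : has_induced claw e -> exists c a b d,
  [/\ [&& e c a, e c b & e c d], [&& ~~ e a b, ~~ e a d & ~~ e b d] & uniq [:: c; a; b; d]].
Proof.
move=> [g [g_inj gE]].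
pose o0 := @Ordinal 4 0 isT; pose o1 := @Ordinal 4 1 isT.
pose o2 := @Ordinal 4 2 isT; pose o3 := @Ordinal 4 3 isT.
exists (g o0), (g o1), (g o2), (g o3); rewrite !gE //; split => //.
by rewrite -[X in uniq X]/(map g [:: o0; o1; o2; o3]) (map_inj_uniq g_inj).
Qed.

Lemma induced_bull_witness : has_induced bull e -> exists a b c d f,
  [/\ [&& e a b, e a c, e b c, e a d & e b f],
      [&& ~~ e a f, ~~ e b d, ~~ e c d, ~~ e c f & ~~ e d f] & uniq [:: a; b; c; d; f]].
Proof.
move=> [g [g_inj gE]].
pose o0 := @Ordinal 5 0 isT; pose o1 := @Ordinal 5 1 isT; pose o2 := @Ordinal 5 2 isT.
pose o3 := @Ordinal 5 3 isT; pose o4 := @Ordinal 5 4 isT.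
exists (g o0), (g o1), (g o2), (g o3), (g o4); rewrite !gE //; split => //.
by rewrite -[X in uniq X]/(map g [:: o0; o1; o2; o3; o4]) (map_inj_uniq g_inj).
Qed.

Lemma complement_triangle_free_claw_bull_free :
  triangle_free (complement e) -> claw_bull_free e.
Proof.
move=> tf; split.
  move=> /induced_claw_witness [c [a [b [d [_ /and3P[ab ad bd]]]]]].
  rewrite /= !inE !negb_or => /and4P[_ /andP[nab nad] nbd _].
  by have := tf a b d; rewrite /complement nab nad nbd ab ad bd.
move=> /induced_bull_witness [a [b [c [d [f [_ /and5P[_ _ cd cf df]]]]]]].
rewrite /= !inE !negb_or => /and5P[_ _ /andP[ncd ncf] ndf _].
by have := tf c d f; rewrite /complement ncd ncf ndf cd cf df.
Qed.

Section Expansion.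
Variables (n : nat) (f : rel 'I_n) (phi : T -> 'I_n).
Hypothesis phiE : forall x y, x != y -> e x y = (phi x == phi y) || f (phi x) (phi y).

Lemma expansion_class_neq_nonedge x y : x != y -> ~~ e x y -> phi x != phi y.
Proof. by move=> nxy; rewrite phiE // negb_or => /andP[]. Qed.

Lemma expansion_class_neq_separated z x y : z != x -> z != y -> e z x -> ~~ e z y ->
  phi x != phi y.
Proof. by move=> nzx nzy; rewrite !phiE // => zx; apply: contraNneq => <-. Qed.

Lemma expansion_base_edge x y : phi x != phi y -> e x y -> f (phi x) (phi y).
Proof.
move=> nphi exy; move: (exy); rewrite phiE ?(negbTE nphi) //.
by apply: contraNneq nphi => ->.
Qed.

Lemma expansion_claw_free : max_degree_two f -> ~ has_induced claw e.
Proof.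
move=> deg /induced_claw_witness [c [a [b [d [/and3P[ca cb cd] /and3P[ab ad bd]]]]]].
rewrite /= !inE !negb_or => /and4P[_ /andP[nab nad] nbd _].
have pca : phi c != phi a by apply: (expansion_class_neq_separated (z := b)); graph.
have pcb : phi c != phi b by apply: (expansion_class_neq_separated (z := a)); graph.
have pcd : phi c != phi d by apply: (expansion_class_neq_separated (z := a)); graph.
have := deg _ _ _ _ (expansion_base_edge pca ca) (expansion_base_edge pcb cb)
  (expansion_base_edge pcd cd).
by rewrite !(negbTE (expansion_class_neq_nonedge _ _)).
Qed.

Lemma expansion_bull_free : triangle_free f -> ~ has_induced bull e.
Proof.
move=> tf /induced_bull_witness [a [b [c [d [g [/and5P[ab ac bc ad bg] nonedges _]]]]]].
case/and5P: nonedges => ag bd cd cg dg.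
have pab : phi a != phi b by apply: (expansion_class_neq_separated (z := d)); graph.
have pac : phi a != phi c by apply: (expansion_class_neq_separated (z := d)); graph.
have pbc : phi b != phi c by apply: (expansion_class_neq_separated (z := g)); graph.
have := tf (phi a) (phi b) (phi c).
by rewrite !expansion_base_edge.
Qed.

End Expansion.

Lemma expansion_claw_bull_free n (f : rel 'I_n) :
  triangle_free f -> max_degree_two f -> expansion_of f e -> claw_bull_free e.
Proof.
move=> tf deg [phi [_ phiE]].
by split; [exact: expansion_claw_free phiE deg | exact: expansion_bull_free phiE tf].
Qed.

(** * Disjointness of the three classes *)

Lemma expansion_stable_triple n (f : rel 'I_n) (i j k : 'I_n) :
  expansion_of f e -> uniq [:: i; j; k] -> ~~ f i j -> ~~ f j k -> ~~ f i k ->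
  ~ triangle_free (complement e).
Proof.
move=> [phi [surj phiE]].
have [x <-] := surj i; have [y <-] := surj j; have [z <-] := surj k.
move=> ijk fij fjk fik tf.
move: ijk; rewrite /= !inE !negb_or => /andP[/andP[pxy pxz] /andP[pyz _]].
have neq_of u v : phi u != phi v -> u != v by apply: contraNneq => ->.
have nxy := neq_of _ _ pxy; have nyz := neq_of _ _ pyz; have nxz := neq_of _ _ pxz.
have := tf x y z; rewrite /complement nxy nyz nxz !phiE //.
by rewrite (negbTE pxy) (negbTE pyz) (negbTE pxz) (negbTE fij) (negbTE fjk) (negbTE fik).
Qed.

Lemma class_i_complement_not_triangle_free : class_i e -> ~ triangle_free (complement e).
Proof.
move=> [L [L4 expn]].
apply: (expansion_stable_triple (i := inord 0) (j := inord 2) (k := inord 4) expn);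
  by rewrite /= ?inE /path_graph -?val_eqE /= !inordK //; lia.
Qed.

Lemma class_ii_complement_not_triangle_free : class_ii e -> ~ triangle_free (complement e).
Proof.
move=> [L [L6 expn]]; have [h0 h2 h4] : [/\ 0 < L, 2 < L & 4 < L] by split; lia.
apply: (expansion_stable_triple (i := Ordinal h0) (j := Ordinal h2) (k := Ordinal h4) expn);
  by rewrite /= ?inE /cycle_graph -?val_eqE /= ?eq_succ_modn //; lia.
Qed.

Lemma path_expansion_end_simplicial n (phi : T -> 'I_n) x y z :
  (forall u v, u != v -> e u v = (phi u == phi v) || path_graph (phi u) (phi v)) ->
  val (phi x) = 0 -> uniq [:: x; y; z] -> e x y -> e x z -> e y z.
Proof.
move=> phiE x0; rewrite /= !inE !negb_or andbT => /andP[/andP[nxy nxz] nyz].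
rewrite !phiE // /path_graph -!val_eqE x0 /=.
by move: (val (phi y)) (val (phi z)) => Y Z; lia.
Qed.

Lemma class_i_not_class_ii : class_i e -> ~ class_ii e.
Proof.
move=> [L [_ [phi [surj phiE]]]] [L' [L6 [psi [surj' psiE]]]].
have [x /(congr1 val) x0] := surj ord0.
have [a [b [xa xb xab nab]]] :=
  cycle_graph_open_neighbourhood (psi x) (leq_trans (isT : 4 <= 6) L6).
have [[y ya] [z zb]] := (surj' a, surj' b); subst a b.
have xyz : uniq [:: x; y; z] by apply: (@map_uniq _ _ psi).
move: xab (xyz); rewrite /= !inE !negb_or !andbT.
move=> /andP[_ pyz] /andP[/andP[nxy nxz] nyz].
have exy : e x y by rewrite psiE // xa orbT.
have exz : e x z by rewrite psiE // xb orbT.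
have := path_expansion_end_simplicial phiE x0 xyz exy exz.
by rewrite psiE // (negbTE pyz) (negbTE nab).
Qed.

(** * Growing a path expansion in a (claw, bull)-free graph *)

Lemma connect_cut_edge (A : pred T) u v : connect e u v -> A u -> ~~ A v ->
  exists x y, [/\ A x, ~~ A y & e x y].
Proof.
move=> /connectP[p]; elim: p u => [|z p IH] u /=; first by move=> _ -> ->.
move=> /andP[euz pz] lz Au nAv; case Az: (A z); first exact: IH pz lz Az nAv.
by exists u, z; rewrite Az.
Qed.

Definition induced_P5 v0 v1 v2 v3 v4 := [/\ e v0 v1, e v1 v2, e v2 v3, e v3 v4 &
  [/\ ~~ e v0 v2, ~~ e v0 v3, ~~ e v0 v4 & [/\ ~~ e v1 v3, ~~ e v1 v4 & ~~ e v2 v4]]].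

Definition attached (S : {set T}) w := (w \notin S) && [exists x in S, e w x].

Definition near (i j : nat) := (i <= j.+1) && (j <= i.+1).

Lemma near_sym i j : near i j = near j i.
Proof. by rewrite /near andbC. Qed.

(* [S] induces an expansion of the path [0 - 1 - ... - n-1], [phi x] being the index of
   the clique of [x]. *)
Definition path_expansion_on (S : {set T}) (n : nat) (phi : T -> nat) :=
  [/\ 5 <= n, forall x, x \in S -> phi x < n,
      forall i, i < n -> exists2 x, x \in S & phi x = i &
      forall x y, x \in S -> y \in S -> x != y -> e x y = near (phi x) (phi y)].

Lemma path_expansion_of_P5 v0 v1 v2 v3 v4 : induced_P5 v0 v1 v2 v3 v4 ->
  exists S n phi, path_expansion_on S n phi.
Proof.
move=> [e01 e12 e23 e34 [n02 n03 n04 [n13 n14 n24]]].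
pose s := [:: v0; v1; v2; v3; v4]; have s_uniq : uniq s by distinct.
exists [set x in s], 5, (index^~ s); split => //.
- by move=> x; rewrite inE -index_mem.
- move=> i i5; exists (nth v0 s i); first by rewrite inE mem_nth.
  by rewrite index_uniq.
move=> x y; rewrite !in_set => /(nthP v0)[i i5 <-] /(nthP v0)[j j5 <-].
rewrite !index_uniq //.
by case: i i5 => [|[|[|[|[|//]]]]] _; case: j j5 => [|[|[|[|[|//]]]]] _;
  rewrite /= ?eqxx // => _; rewrite /near /=; edge.
Qed.

Lemma path_expansion_add (S : {set T}) n phi w k : 5 <= n -> (forall x, x \in S -> phi x < n) ->
  (forall i, i < n -> i != k -> exists2 x, x \in S & phi x = i) ->
  (forall x y, x \in S -> y \in S -> x != y -> e x y = near (phi x) (phi y)) ->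
  w \notin S -> k < n -> (forall x, x \in S -> e w x = near k (phi x)) ->
  path_expansion_on (w |: S) n (fun x => if x == w then k else phi x).
Proof.
move=> n_ge5 phi_lt phi_surj phiE w_notin lt_kn wE; split => //.
- by move=> x; rewrite in_setU1; case: eqP => //= _; apply: phi_lt.
- move=> i lt_in; have [-> | ik] := eqVneq i k; first by exists w; rewrite ?setU11 ?eqxx.
  have [x xS <-] := phi_surj i lt_in ik; exists x; first by rewrite setU1r.
  by rewrite ifN //; apply: contraNneq w_notin => <-.
move=> x y; rewrite !in_setU1.
have [-> | xw] := eqVneq x w; have [-> | yw] := eqVneq y w; rewrite /= ?eqxx //=.
- by move=> _ yS _; apply: wE.
- by move=> xS _ _; rewrite esym wE // near_sym.
- exact: phiE.
Qed.

Section ClawBullFree.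
Hypotheses (nclaw : ~ has_induced claw e) (nbull : ~ has_induced bull e).
Hypothesis e_connected : forall x y, connect e x y.

Lemma no_claw c a b d : e c a -> e c b -> e c d -> ~~ e a b -> ~~ e a d -> ~~ e b d ->
  a != b -> a != d -> b != d -> False.
Proof. by move=> *; apply: nclaw; apply: (@claw_induced c a b d). Qed.

Lemma no_bull a b c d f : e a b -> e a c -> e b c -> e a d -> e b f ->
  ~~ e a f -> ~~ e b d -> ~~ e c d -> ~~ e c f -> ~~ e d f -> False.
Proof. by move=> *; apply: nbull; apply: (@bull_induced a b c d f). Qed.

(* Take the first edge [y z] leaving the closed neighbourhood of [a x b] on a path to [c]:
   claw- and bull-freeness leave only the induced paths [z y a x b] and [z y b x a]. *)
Lemma induced_P5_of_P3 a x b c : e a x -> e x b -> ~~ e a b -> a != b ->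
  ~~ e c a -> ~~ e c x -> ~~ e c b -> exists v0 v1 v2 v3 v4, induced_P5 v0 v1 v2 v3 v4.
Proof.
move=> ax xb ab nab ca cx cb.
pose A := [pred v | [|| v == a, v == x, v == b, e a v, e x v | e b v]].
have [y [z [Ay]]] : exists y z, [/\ A y, ~~ A z & e y z].
  apply: connect_cut_edge (e_connected a c) _ _; first by rewrite /= eqxx.
  by rewrite /= !negb_or; repeat (apply/andP; split); graph.
rewrite /= !negb_or => /and5P[za zx zb az /andP[xz bz]] yz.
have [ya yx yb] : [/\ y != a, y != x & y != b] by split; neq.
move: Ay; rewrite /= (negbTE ya) (negbTE yx) (negbTE yb) /=.
case exy: (e x y); case eay: (e a y); case eby: (e b y) => //= _.
- by case: (no_claw (c := y) (a := a) (b := b) (d := z)); graph.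
- by case: (no_bull (a := x) (b := y) (c := a) (d := b) (f := z)); graph.
- by case: (no_bull (a := x) (b := y) (c := b) (d := a) (f := z)); graph.
- by case: (no_claw (c := x) (a := a) (b := b) (d := y)); graph.
- by case: (no_claw (c := y) (a := a) (b := b) (d := z)); graph.
- by exists z, y, a, x, b; do !split; edge.
- by exists z, y, b, x, a; do !split; edge.
Qed.

Lemma induced_P5_of_stable_triple a b c : ~~ e a b -> ~~ e a c -> ~~ e b c ->
  uniq [:: a; b; c] -> exists v0 v1 v2 v3 v4, induced_P5 v0 v1 v2 v3 v4.
Proof.
move=> ab ac bc; rewrite /= !inE !negb_or andbT => /andP[/andP[nab nac] nbc].
have [y [z [ay]]] : exists y z, [/\ (y == a) || e a y, ~~ ((z == a) || e a z) & e y z].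
  by apply: (connect_cut_edge (A := [pred v | (v == a) || e a v]) (e_connected a b));
    rewrite /= ?eqxx // negb_or eq_sym nab.
rewrite negb_or => /andP[za az] yz.
have ya : y != a by apply: contraNneq az => <-.
move: ay; rewrite (negbTE ya) /= => ay.
case ecy: (e c y).
  case eby: (e b y); first by case: (no_claw (c := y) (a := a) (b := b) (d := c)); graph.
  by apply: (@induced_P5_of_P3 a y c b); graph.
case ecz: (e c z).
  case eby: (e b y); first by apply: (@induced_P5_of_P3 a y b c); graph.
  case ebz: (e b z); first by apply: (@induced_P5_of_P3 c z b a); graph.
  by apply: (@induced_P5_of_P3 a y z b); graph.
by apply: (@induced_P5_of_P3 a y z c); graph.
Qed.

Section Extension.
Variables (S : {set T}) (n : nat) (phi : T -> nat).
Hypotheses (n_ge5 : 5 <= n) (phi_lt : forall x, x \in S -> phi x < n).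
Hypothesis phi_surj : forall i, i < n -> exists2 x, x \in S & phi x = i.
Hypothesis phiE : forall x y, x \in S -> y \in S -> x != y -> e x y = near (phi x) (phi y).

Lemma class_neq x y : phi x != phi y -> x != y.
Proof. by apply: contraNneq => ->. Qed.

Lemma class_edge x y : x \in S -> y \in S -> x != y -> near (phi x) (phi y) -> e x y.
Proof. by move=> xS yS nxy; rewrite phiE. Qed.

Lemma class_nonedge x y : x \in S -> y \in S -> ~~ near (phi x) (phi y) -> ~~ e x y.
Proof.
move=> xS yS far; rewrite phiE // class_neq //.
by apply: contraNneq far => ->; rewrite /near leqnSn.
Qed.

Variable w : T.
Hypothesis w_notin : w \notin S.

Lemma w_neq x : x \in S -> w != x.
Proof. by apply: contraTneq => <-. Qed.

(* [lia] is much faster once the graph hypotheses are cleared. *)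
Ltac class_lia := repeat match goal with
  | H : is_true (e _ _) |- _ => clear H
  | H : is_true (~~ e _ _) |- _ => clear H
  | H : e _ _ = _ |- _ => clear H
  | H : is_true (_ \in _) |- _ => clear H
  | H : is_true (_ \notin _) |- _ => clear H
  end; lia.

Ltac inS := solve [ graph | by apply: w_neq | by rewrite eq_sym; apply: w_neq
  | apply: class_neq; class_lia
  | apply: class_nonedge => //; rewrite /near; class_lia
  | apply: class_edge => //; first [ rewrite /near; class_lia | neq | apply: class_neq; class_lia ]
  | class_lia ].

Definition sees i := [exists x in S, (phi x == i) && e w x].

Lemma seesP i : reflect (exists x, [/\ x \in S, phi x = i & e w x]) (sees i).
Proof.
apply: (iffP existsP) => [[x /and3P[xS /eqP xi wx]] | [x [xS xi wx]]]; exists x => //.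
by rewrite xS xi eqxx.
Qed.

Lemma sees_edge x : x \in S -> e w x -> sees (phi x).
Proof. by move=> xS wx; apply/seesP; exists x. Qed.

Lemma unseen_nonedge i x : ~~ sees i -> x \in S -> phi x = i -> ~~ e w x.
Proof. by move=> unseen xS xi; apply: contra unseen; rewrite -xi; apply: sees_edge. Qed.

Lemma sees_lt i : sees i -> i < n.
Proof. by case/seesP=> x [xS <- _]; apply: phi_lt. Qed.

Lemma unseen_witness i : i < n -> ~~ sees i -> exists x, [/\ x \in S, phi x = i & ~~ e w x].
Proof.
move=> lt_in unseen; have [x xS xi] := phi_surj lt_in.
by exists x; split => //; apply: unseen_nonedge unseen xS xi.
Qed.

Lemma no_lone_contact c a b : c \in S -> a \in S -> b \in S -> e w c -> ~~ e w a -> ~~ e w b ->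
  (phi a).+1 = phi c -> phi b = (phi c).+1 -> False.
Proof. by move=> *; apply: (@no_claw c w a b); inS. Qed.

Lemma no_spread_contacts x y z : x \in S -> y \in S -> z \in S -> e w x -> e w y -> e w z ->
  (phi x).+1 < phi y -> (phi y).+1 < phi z -> False.
Proof. by move=> *; apply: (@no_claw w x y z); inS. Qed.

Lemma no_lone_contact_pair x y a b : x \in S -> y \in S -> a \in S -> b \in S ->
  e w x -> e w y -> ~~ e w a -> ~~ e w b ->
  phi y = (phi x).+1 -> (phi a).+1 = phi x -> phi b = (phi y).+1 -> False.
Proof. by move=> *; apply: (@no_bull x y w a b); inS. Qed.

Lemma no_split_contact x x' y z : x \in S -> x' \in S -> e w x -> ~~ e w x' -> ~~ e w y ->
  ~~ e w z -> phi x' = phi x -> e x y -> e x' y -> ~~ e x z -> ~~ e x' z -> e y z -> False.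
Proof.
move=> xS x'S *; have nxx' : x != x' by apply: (@edge_nonedge_neq w).
by apply: (@no_bull x y x' w z); inS.
Qed.

Lemma sees_lone k : sees k -> 0 < k -> k.+1 < n -> ~~ sees k.-1 -> ~~ sees k.+1 -> False.
Proof.
move=> /seesP[c [cS ck wc]] k_gt0 lt_kn lo hi.
have /unseen_witness/(_ lo) [a [aS ak wa]] : k.-1 < n by class_lia.
have /unseen_witness/(_ hi) [b [bS bk wb]] := lt_kn.
by apply: (no_lone_contact cS aS bS wc wa wb); class_lia.
Qed.

Lemma sees_spread i j k : sees i -> sees j -> sees k -> i.+1 < j -> j.+1 < k -> False.
Proof.
move=> /seesP[x [xS <- wx]] /seesP[y [yS <- wy]] /seesP[z [zS <- wz]].
exact: no_spread_contacts.
Qed.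

Lemma sees_lone_pair t : sees t -> sees t.+1 -> 0 < t -> t.+2 < n ->
  ~~ sees t.-1 -> ~~ sees t.+2 -> False.
Proof.
move=> /seesP[x [xS xt wx]] /seesP[y [yS yt wy]] t_gt0 lt_tn lo hi.
have /unseen_witness/(_ lo) [a [aS pa wa]] : t.-1 < n by class_lia.
have /unseen_witness/(_ hi) [b [bS pb wb]] := lt_tn.
by apply: (no_lone_contact_pair xS yS aS bS wx wy wa wb); class_lia.
Qed.

Lemma sees_pair_lower_gap t i : sees t -> sees t.+1 -> 0 < t -> ~~ sees t.-1 -> sees i ->
  t.+2 < i \/ i.+2 < t -> False.
Proof.
move=> /seesP[x [xS xt wx]] /seesP[y [yS yt wy]] t_gt0 lo /seesP[z [zS zi wz]] far.
have /unseen_witness/(_ lo) [a [aS pa wa]] : t.-1 < n by have := phi_lt xS; class_lia.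
by apply: (@no_bull x w y a z); inS.
Qed.

Lemma sees_pair_upper_gap t i : sees t -> sees t.+1 -> t.+2 < n -> ~~ sees t.+2 -> sees i ->
  t.+3 < i \/ i.+1 < t -> False.
Proof.
move=> /seesP[x [xS xt wx]] /seesP[y [yS yt wy]] lt_tn hi /seesP[z [zS zi wz]] far.
have /unseen_witness/(_ hi) [b [bS pb wb]] := lt_tn.
by apply: (@no_bull y w x b z); inS.
Qed.

Definition sees_exactly (P : pred nat) := forall i, i < n -> sees i = P i.

Lemma sees_exactly_between (P : pred nat) m M : (forall i, sees i -> m <= i <= M) ->
  (forall i, P i -> m <= i <= M) -> (forall i, m <= i <= M -> sees i = P i) -> sees_exactly P.
Proof.
move=> seen_in P_in inside i _; case: (boolP (m <= i <= M)) => [/inside // | out].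
by rewrite (contraNF (@seen_in i) out) (contraNF (@P_in i) out).
Qed.

Lemma sees_exactly_eq (P Q : pred nat) :
  (forall i, i < n -> P i = Q i) -> sees_exactly P -> sees_exactly Q.
Proof. by move=> PQ sP i lt_in; rewrite -PQ // sP. Qed.

Section SeenRange.
Variables m M : nat.
Hypotheses (seen_m : sees m) (seen_M : sees M) (seen_in : forall i, sees i -> m <= i <= M).

Lemma unseen_outside i : i < m \/ M < i -> ~~ sees i.
Proof. by move=> out; apply/negP => /seen_in; class_lia. Qed.

Lemma sees_interval : M <= m.+2 -> sees_exactly [pred i | m <= i <= M].
Proof.
move=> narrow; apply: (sees_exactly_between seen_in) => // i /= /andP[mi iM].
suff -> : sees i by rewrite mi iM.
have [im | [iM' | im1]] : i = m \/ i = M \/ i = m.+1 by class_lia.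
- by rewrite im.
- by rewrite iM'.
rewrite im1; apply: contraT => unseen; exfalso; have lt_Mn := sees_lt seen_M.
have [lt_m3n | le_nm3] := ltnP m.+3 n.
  have eM : M = m.+2.
    have : M != m.+1 by apply: contraNneq unseen => <-.
    by class_lia.
  have seen_m2 : sees m.+2 by rewrite -eM.
  by apply: (sees_lone seen_m2 isT lt_m3n unseen); apply: unseen_outside; class_lia.
by apply: (sees_lone seen_m _ _ _ unseen); try apply: unseen_outside; class_lia.
Qed.

Lemma sees_pattern_narrow : M <= m.+2 -> [\/ exists2 k, k < n & sees_exactly (near k),
  sees_exactly (pred1 0) | sees_exactly (pred1 n.-1)].
Proof.
move=> narrow; have lt_Mn := sees_lt seen_M; have /andP[_ le_mM] := seen_in seen_m.
have interval := sees_interval narrow.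
have window k : k < n -> (forall i, i < n -> (m <= i <= M) = near k i) ->
    [\/ exists2 k, k < n & sees_exactly (near k),
      sees_exactly (pred1 0) | sees_exactly (pred1 n.-1)].
  by move=> lt_kn kE; apply: Or31; exists k => //; apply: sees_exactly_eq interval.
have [eM | [eM | eM]] : M = m \/ M = m.+1 \/ M = m.+2 by class_lia.
- have [m0 | [mN | m_in]] : m = 0 \/ m = n.-1 \/ 0 < m < n.-1 by class_lia.
  + by apply: Or32; apply: sees_exactly_eq interval => i _ /=; class_lia.
  + by apply: Or33; apply: sees_exactly_eq interval => i _ /=; class_lia.
  + by exfalso; apply: (sees_lone seen_m); try apply: unseen_outside; class_lia.
- have [m0 | [mN | m_in]] : m = 0 \/ m.+1 = n.-1 \/ 0 < m /\ m.+2 < n by class_lia.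
  + by apply: (window 0) => [|i lt_in]; rewrite /near; class_lia.
  + by apply: (window n.-1) => [|i lt_in]; rewrite /near; class_lia.
  + have seen_m1 : sees m.+1 by rewrite -eM.
    by exfalso; apply: (sees_lone_pair seen_m seen_m1); try apply: unseen_outside; class_lia.
by apply: (window m.+1) => [|i lt_in]; rewrite /near; class_lia.
Qed.

Section Wide.
Hypothesis wide : m.+2 < M.

Lemma wide_gap j : sees j -> j <= m.+1 \/ M.-1 <= j.
Proof.
move=> seen_j; case: (leqP j m.+1) => [|lo]; [by left | right].
case: (leqP M.-1 j) => // hi; exfalso.
by apply: (sees_spread seen_m seen_j seen_M); class_lia.
Qed.

Lemma wide_min : m = 0.
Proof.
case: (posnP m) => // m_pos; exfalso; have lt_Mn := sees_lt seen_M.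
case seen_m1: (sees m.+1).
  apply: (sees_pair_lower_gap seen_m seen_m1 m_pos _ seen_M); last by class_lia.
  by apply: unseen_outside; class_lia.
by apply: (sees_lone seen_m m_pos _ _ (negbT seen_m1)); [| apply: unseen_outside]; class_lia.
Qed.

Lemma wide_max : M = n.-1.
Proof.
have lt_Mn := sees_lt seen_M; have seen_0 : sees 0 by rewrite -wide_min.
case: (ltnP M n.-1) => [lt_M | ?]; last by class_lia.
exfalso; case seen_M1: (sees M.-1).
  have seen_M' : sees (M.-1).+1 by rewrite prednK //; class_lia.
  by apply: (sees_pair_upper_gap seen_M1 seen_M' _ _ seen_0); try apply: unseen_outside; class_lia.
by apply: (sees_lone seen_M _ _ (negbT seen_M1)); try apply: unseen_outside; class_lia.
Qed.

Lemma sees_pattern_wide : sees_exactly [pred i | (i == 0) || (i == n.-1)].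
Proof.
have [m0 MN] := (wide_min, wide_max).
have seen_0 : sees 0 by rewrite -m0.
have seen_n1 : sees n.-1 by rewrite -MN.
have unseen_1 : ~~ sees 1.
  apply/negP => seen_1; apply: (sees_pair_upper_gap seen_0 seen_1 _ _ seen_n1); try class_lia.
  by apply/negP => /wide_gap; class_lia.
have unseen_n2 : ~~ sees n.-2.
  apply/negP => seen_n2.
  have seen_n1' : sees (n.-2).+1 by have -> : (n.-2).+1 = n.-1 by class_lia.
  apply: (sees_pair_lower_gap seen_n2 seen_n1' _ _ seen_0); try class_lia.
  by apply/negP => /wide_gap; class_lia.
apply: (sees_exactly_between seen_in) => i /=; first by class_lia.
move=> i_in; case: (boolP (sees i)) => [seen_i | unseen_i].
  have : i != 1 by apply: contraNneq unseen_1 => <-.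
  have : i != n.-2 by apply: contraNneq unseen_n2 => <-.
  by have := wide_gap seen_i; class_lia.
have : i != 0 by apply: contraNneq unseen_i => ->.
have : i != n.-1 by apply: contraNneq unseen_i => ->.
by class_lia.
Qed.

End Wide.

End SeenRange.

Lemma sees_pattern : [exists x in S, e w x] ->
  [\/ exists2 k, k < n & sees_exactly (near k), sees_exactly (pred1 0),
       sees_exactly (pred1 n.-1) | sees_exactly [pred i | (i == 0) || (i == n.-1)]].
Proof.
move=> /existsP[x /andP[xS wx]]; have ex : exists i, sees i by exists (phi x); apply: sees_edge.
have [m seen_m min_m] := ex_minnP ex.
have [M seen_M max_M] := ex_maxnP ex (fun i seen_i => ltnW (sees_lt seen_i)).
have seen_in i : sees i -> m <= i <= M by move=> seen_i; rewrite min_m ?max_M.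
have [narrow | wide] := leqP M m.+2; last exact/Or44/(sees_pattern_wide seen_m seen_M seen_in).
by case: (sees_pattern_narrow seen_m seen_M seen_in narrow) => ?;
  [apply: Or41 | apply: Or42 | apply: Or43].
Qed.

Lemma sees_exactly_uniform (P : pred nat) : sees_exactly P ->
  (forall x, x \in S -> P (phi x) -> e w x) -> forall x, x \in S -> e w x = P (phi x).
Proof.
move=> seenE full x xS; case Px: (P (phi x)); first exact: full.
by apply/negbTE; apply: (unseen_nonedge _ xS erefl); rewrite seenE ?phi_lt // Px.
Qed.

Lemma complete_to_class_of_gap i j l x : x \in S -> phi x = i -> sees i ->
  ~~ sees j -> ~~ sees l -> j < n -> l < n ->
  (j.+1 = i /\ l.+1 = j) \/ (j = i.+1 /\ l = j.+1) -> e w x.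
Proof.
move=> xS xi /seesP[y [yS yi wy]] unseen_j unseen_l lt_jn lt_ln dir.
have [a [aS aj wa]] := unseen_witness lt_jn unseen_j.
have [b [bS bl wb]] := unseen_witness lt_ln unseen_l.
by apply: contraT => wx; exfalso; apply: (@no_split_contact y x a b); inS.
Qed.

Lemma uniform_low_end : sees_exactly (pred1 0) ->
  forall x, x \in S -> e w x = (phi x == 0).
Proof.
move=> seenE; apply: (sees_exactly_uniform seenE) => x xS /eqP x0.
by apply: (complete_to_class_of_gap (j := 1) (l := 2) xS x0); rewrite ?seenE //; class_lia.
Qed.

Lemma uniform_high_end : sees_exactly (pred1 n.-1) ->
  forall x, x \in S -> e w x = (phi x == n.-1).
Proof.
move=> seenE; apply: (sees_exactly_uniform seenE) => x xS /eqP xN.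
apply: (complete_to_class_of_gap (j := n.-2) (l := n - 3) xS xN); rewrite ?seenE //=;
  class_lia.
Qed.

Lemma uniform_both_ends : sees_exactly [pred i | (i == 0) || (i == n.-1)] ->
  forall x, x \in S -> e w x = (phi x == 0) || (phi x == n.-1).
Proof.
move=> seenE; apply: (sees_exactly_uniform seenE) => x xS /orP[] /eqP xi.
  by apply: (complete_to_class_of_gap (j := 1) (l := 2) xS xi); rewrite ?seenE //=; class_lia.
apply: (complete_to_class_of_gap (j := n.-2) (l := n - 3) xS xi); rewrite ?seenE //=;
  class_lia.
Qed.

Lemma uniform_window k : k < n -> sees_exactly (near k) ->
  forall x, x \in S -> e w x = near k (phi x).
Proof.
move=> lt_kn seenE; apply: (sees_exactly_uniform seenE) => x xS near_x.
have lt_xn := phi_lt xS.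
have seen i : i < n /\ near k i -> exists y, [/\ y \in S, phi y = i & e w y].
  by case=> lt_in ki; apply/seesP; rewrite seenE.
have unseen i : i < n /\ ~~ near k i -> exists y, [/\ y \in S, phi y = i & ~~ e w y].
  by case=> lt_in ki; apply: unseen_witness; rewrite ?seenE.
have gap j l : j < n -> l < n -> ~~ near k j -> ~~ near k l ->
    (j.+1 = phi x /\ l.+1 = j) \/ (j = (phi x).+1 /\ l = j.+1) -> e w x.
  move=> lt_jn lt_ln kj kl.
  by apply: (complete_to_class_of_gap (j := j) (l := l) xS erefl) => //; rewrite seenE.
have [xk | [xk | xk]] : (phi x).+1 = k \/ phi x = k \/ phi x = k.+1.
  by move: near_x; rewrite /near; class_lia.
- have [le_nk2 | lt_k2n] := leqP n k.+2.
    by apply: (gap k.-2 (k - 3)); rewrite /near; class_lia.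
  have /seen[y [yS yk wy]] : k < n /\ near k k by rewrite /near; class_lia.
  have /seen[z [zS zk wz]] : k.+1 < n /\ near k k.+1 by rewrite /near; class_lia.
  have /unseen[b [bS bk wb]] : k.+2 < n /\ ~~ near k k.+2 by rewrite /near; class_lia.
  apply: contraT => wx; exfalso.
  by apply: (no_lone_contact_pair yS zS xS bS wy wz wx wb); class_lia.
- apply: contraT => wx; exfalso; have [le2k | ltk2] := leqP 2 k.
    have /seen[y [yS yk wy]] : k.-1 < n /\ near k k.-1 by rewrite /near; class_lia.
    have /unseen[a [aS ak wa]] : k.-2 < n /\ ~~ near k k.-2 by rewrite /near; class_lia.
    by apply: (no_lone_contact yS aS xS wy wa wx); class_lia.
  have /seen[y [yS yk wy]] : k.+1 < n /\ near k k.+1 by rewrite /near; class_lia.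
  have /unseen[b [bS bk wb]] : k.+2 < n /\ ~~ near k k.+2 by rewrite /near; class_lia.
  by apply: (no_lone_contact yS xS bS wy wx wb); class_lia.
- have [le2k | ltk2] := leqP 2 k; last by apply: (gap k.+2 k.+3); rewrite /near; class_lia.
  have /seen[y [yS yk wy]] : k.-1 < n /\ near k k.-1 by rewrite /near; class_lia.
  have /seen[z [zS zk wz]] : k < n /\ near k k by rewrite /near; class_lia.
  have /unseen[a [aS ak wa]] : k.-2 < n /\ ~~ near k k.-2 by rewrite /near; class_lia.
  apply: contraT => wx; exfalso.
  by apply: (no_lone_contact_pair yS zS aS xS wy wz wa wx); class_lia.
Qed.

Lemma extend_or_end_contacts : [exists x in S, e w x] ->
  (exists n' phi', path_expansion_on (w |: S) n' phi') \/
  (forall x, x \in S -> e w x = (phi x == 0) || (phi x == n.-1)).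
Proof.
move=> attached; case: (sees_pattern attached) => [[k lt_kn seenE] | seenE | seenE | seenE].
- left; exists n, (fun x => if x == w then k else phi x).
  apply: path_expansion_add => // [i lt_in _ | ]; first exact: phi_surj.
  exact: uniform_window.
- left; exists n.+1, (fun x => if x == w then 0 else (phi x).+1).
  apply: path_expansion_add => //; first by class_lia.
  + move=> [//|i] lt_in _; have [x xS <-] := @phi_surj i lt_in; by exists x.
  + by move=> x xS; rewrite uniform_low_end // /near; class_lia.
- left; exists n.+1, (fun x => if x == w then n else phi x).
  apply: path_expansion_add => //; first by class_lia.
  + by move=> x xS; have := phi_lt xS; class_lia.
  + by move=> i lt_in ni; apply: phi_surj; class_lia.
  + by move=> x xS; rewrite uniform_high_end // /near; have := phi_lt xS; class_lia.
- by right; apply: uniform_both_ends.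
Qed.

End Extension.

Lemma connected_closed_full (A : pred T) x0 : A x0 -> (forall y z, A y -> e y z -> A z) ->
  forall x, A x.
Proof.
move=> Ax0 closed x; apply: contraT => nAx.
have [y [z [Ay nAz yz]]] := connect_cut_edge (e_connected x0 x) Ax0 nAx.
by rewrite (closed y z) in nAz.
Qed.

Lemma class_i_of_path_expansion S n phi : path_expansion_on S n phi -> (forall x, x \in S) ->
  class_i e.
Proof.
move=> [n_ge5 phi_lt phi_surj phiE] allS; exists n.-1; split; first by lia.
have lt_phi x : phi x < n.-1.+1 by have := phi_lt x (allS x); lia.
exists (fun x => inord (phi x)); split.
  move=> i; have [x _ xi] : exists2 x, x \in S & phi x = i.
    by apply: phi_surj; have := ltn_ord i; lia.
  by exists x; apply: val_inj; rewrite /= inordK ?xi.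
by move=> x y nxy; rewrite phiE // /path_graph -val_eqE /= !inordK // /near; lia.
Qed.

Section EndContacts.
Variables (S : {set T}) (n : nat) (phi : T -> nat).
Hypotheses (n_ge5 : 5 <= n) (phi_lt : forall x, x \in S -> phi x < n).
Hypothesis phi_surj : forall i, i < n -> exists2 x, x \in S & phi x = i.
Hypothesis phiE : forall x y, x \in S -> y \in S -> x != y -> e x y = near (phi x) (phi y).
Hypothesis end_contacts : forall w, attached S w ->
  forall x, x \in S -> e w x = (phi x == 0) || (phi x == n.-1).

Lemma attached_notin w x : attached S w -> x \in S -> w != x.
Proof. by case/andP=> w_notin _ xS; apply: contraNneq w_notin => ->. Qed.

Lemma attached_clique w1 w2 : attached S w1 -> attached S w2 -> w1 != w2 -> e w1 w2.
Proof.
move=> att1 att2 n12; apply: contraT => e12; exfalso.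
have [x xS x0] : exists2 x, x \in S & phi x = 0 by apply: phi_surj; lia.
have [y yS y1] : exists2 y, y \in S & phi y = 1 by apply: phi_surj; lia.
have [w1x w2x] : e w1 x /\ e w2 x by rewrite !end_contacts // x0.
have [w1y w2y] : ~~ e w1 y /\ ~~ e w2 y by rewrite !end_contacts // y1; lia.
have nxy : x != y by apply: contraNneq w1y => <-.
have xy : e x y by rewrite phiE // x0 y1.
have [n1y n2y] := (attached_notin att1 yS, attached_notin att2 yS).
by apply: (@no_claw x w1 w2 y); graph.
Qed.

Lemma attached_cover u : (u \in S) || attached S u.
Proof.
have [x0 x0S phi_x0] : exists2 x, x \in S & phi x = 0 by apply: phi_surj; lia.
have [xN xNS phi_xN] : exists2 x, x \in S & phi x = n.-1 by apply: phi_surj; lia.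
apply: (@connected_closed_full [pred u | (u \in S) || attached S u] x0); first by rewrite /= x0S.
move=> y z /= Ay yz; apply: contraT; rewrite negb_or => /andP[zS not_att]; exfalso.
have z_far x : x \in S -> ~~ e z x.
  move=> xS; apply: contra not_att => zx.
  by rewrite /attached zS; apply/existsP; exists x; rewrite xS.
case/orP: Ay => [yS | att_y]; first by have := z_far y yS; rewrite esym yz.
have [yx0 yxN] : e y x0 /\ e y xN by split; rewrite end_contacts // ?phi_x0 ?phi_xN eqxx ?orbT.
have nx0N : x0 != xN by apply/eqP => eq0N; move: phi_xN; rewrite -eq0N phi_x0; lia.
have x0xN : ~~ e x0 xN by rewrite phiE // phi_x0 phi_xN /near; lia.
have [nz0 nzN] : z != x0 /\ z != xN by split; apply: contraNneq zS => ->.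
by apply: (@no_claw y z x0 xN); rewrite ?z_far //; graph.
Qed.

Lemma class_ii_of_attached w0 : attached S w0 -> class_ii e.
Proof.
move=> att0; exists n.+1; split; first by lia.
pose f x := if x \in S then phi x else n.
have lt_f x : f x < n.+1 by rewrite /f; case: ifP => [xS | _]; [have := phi_lt xS | ]; lia.
exists (fun x => inord (f x)); split.
  move=> i; have [lt_in | ] := ltnP i n.
    by have [x xS xi] := phi_surj lt_in; exists x; apply: val_inj; rewrite /= inordK // /f xS.
  exists w0; apply: val_inj; rewrite /= inordK // /f ifN; last by case/andP: att0.
  by have := ltn_ord i; lia.
move=> x y nxy; rewrite /cycle_graph -val_eqE /= !inordK //.
have := attached_cover x; have := attached_cover y; rewrite /f.
case xS: (x \in S); case yS: (y \in S) => /= att_y att_x.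
- have [ltx lty] := (phi_lt xS, phi_lt yS).
  by rewrite phiE // !eq_succ_modn // /near; lia.
- have ltx := phi_lt xS.
  by rewrite esym (end_contacts att_y xS) !eq_succ_modn //; lia.
- have lty := phi_lt yS.
  by rewrite (end_contacts att_x yS) !eq_succ_modn //; lia.
- by rewrite attached_clique // eqxx.
Qed.

End EndContacts.

Lemma path_expansion_grow k S n phi : #|~: S| < k -> path_expansion_on S n phi ->
  class_i e \/ class_ii e.
Proof.
elim: k S n phi => // k IH S n phi small pe; have [n_ge5 phi_lt phi_surj phiE] := pe.
pose irregular w := attached S w &&
  ~~ [forall x in S, e w x == (phi x == 0) || (phi x == n.-1)].
have [w /andP[/andP[w_notin att] not_ends] | regular] := pickP irregular.
  have [[n' [phi' pe']] | ends] := extend_or_end_contacts n_ge5 phi_lt phi_surj phiE w_notin att.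
    have shrink : #|~: (w |: S)| < #|~: S|.
      rewrite setCU; apply: proper_card; rewrite properEneq subsetIr andbT.
      by apply/eqP => /setP/(_ w); rewrite !inE eqxx w_notin.
    by apply: IH pe'; lia.
  by move: not_ends; rewrite negb_forall_in => /existsP[y /andP[yS /eqP]]; rewrite ends.
have end_contacts w : attached S w ->
    forall x, x \in S -> e w x = (phi x == 0) || (phi x == n.-1).
  by move=> att x xS; have := regular w; rewrite /irregular att => /negbFE/forall_inP/(_ x xS)/eqP.
have [w0 att0 | none] := pickP (attached S).
  by right; apply: (class_ii_of_attached n_ge5 phi_lt phi_surj phiE end_contacts att0).
left; apply: (class_i_of_path_expansion pe).
have [x0 x0S _] : exists2 x, x \in S & phi x = 0 by apply: phi_surj; lia.
apply: (@connected_closed_full [pred x | x \in S] x0) => // y z /= yS yz.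
apply: contraFT (none z) => zS; apply/andP; split => //.
by apply/existsP; exists y; rewrite yS esym.
Qed.

Lemma claw_bull_free_trichotomy : [\/ class_i e, class_ii e | triangle_free (complement e)].
Proof.
have [/existsP[a /existsP[b /existsP[c]]] | none] :=
  boolP [exists a, exists b, exists c, [&& complement e a b, complement e b c & complement e a c]].
  rewrite /complement => /and3P[/andP[nab ab] /andP[nbc bc] /andP[nac ac]].
  have abc : uniq [:: a; b; c] by rewrite /= !inE !negb_or nab nac nbc.
  have [v0 [v1 [v2 [v3 [v4 P5]]]]] := induced_P5_of_stable_triple ab ac bc abc.
  have [S [n [phi pe]]] := path_expansion_of_P5 P5.
  by case: (path_expansion_grow (ltnSn _) pe) => ?; [apply: Or31 | apply: Or32].
by apply: Or33 => a b c; move/existsPn: none => /(_ a)/existsPn/(_ b)/existsPn/(_ c).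
Qed.

End ClawBullFree.

End SimpleGraph.

Theorem theorem1 (T : finType) (e : rel T) :
  simple_graph e -> connected_graph e ->
  (claw_bull_free e <-> [\/ class_i e, class_ii e | class_iii e]) /\
  (~ (class_i e /\ class_ii e) /\ ~ (class_i e /\ class_iii e) /\
   ~ (class_ii e /\ class_iii e)).
Proof.
move=> [esym eirr] conn; split; [split|].
- move=> [nclaw nbull].
  by case: (claw_bull_free_trichotomy esym eirr nclaw nbull conn.2) => ?;
    [apply: Or31 | apply: Or32 | apply: Or33].
- case=> [[L [_ expn]] | [L [L6 expn]] | [_ tf]].
  + apply: (expansion_claw_bull_free esym eirr _ _ expn).
      exact: path_graph_triangle_free.
    exact: path_graph_max_degree_two.
  + apply: (expansion_claw_bull_free esym eirr _ _ expn).
      by apply: cycle_graph_triangle_free; apply: leq_trans L6.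
    exact: cycle_graph_max_degree_two.
  + exact: complement_triangle_free_claw_bull_free.
split; first by case=> ci; apply: class_i_not_class_ii.
split; first by case=> ci [_]; apply: class_i_complement_not_triangle_free.
by case=> cii [_]; apply: class_ii_complement_not_triangle_free.
Qed.
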